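(* Let $\mathcal{H}$ be a finite family of rooted digraphs, $D$ a digraph, $k$ an integer and $W\subseteq V(D)$ an $\mathcal{H}$-deletion set of $D$ of size at most $k+1$. Then $D$ has an $\mathcal{H}$-deletion set of size at most $k$ disjoint from $W$ if and only if there exists an ordered partition $\mathcal{S}=(S_1,\ldots,S_q)$ of $W$ such that the instance $(D,\mathcal{S},W,k)$ has a nice solution.
   Context: Subgraphs are not necessarily induced; strong components are maximal sets of mutually reachable vertices. A digraph $F$ is rooted if some vertex of $F$ reaches all vertices of $F$ in $F$; for each such $F$ one such vertex is fixed canonically and denoted $r(F)$ (its root). $X\subseteq V(D)$ is an $\mathcal{H}$-deletion set of $D$ if no strong component of $D-X$ contains a subgraph isomorphic to a graph in $\mathcal{H}$. For $A\subseteq V(D)$ and $Y\subseteq V(D)$, $R(A,Y)$ denotes the set of vertices reachable by a directed path from a vertex of $A$ in $D-Y$. Given an ordered partition $\mathcal{S}=(S_1,\dots,S_q)$ of $W$, a solution for $(D,\mathcal{S},W,k)$ is a set $X\subseteq V(D)$ with $|X|\le k$, $X\cap W=\emptyset$, $X$ an $\mathcal{H}$-deletion set of $D$, and $X$ intersecting every directed $S_i$-$S_j$ path in $D$ for all $i<j$. A solution $X$ is nice if for every subgraph $F\subseteq D$ isomorphic to a graph in $\mathcal{H}$ and every $i\in[q]$, at least one holds: (1) $X\cap V(F)\neq\emptyset$; (2) $r(F)\notin R(S_i,X)$; (3) there is $v\in V(F)$ such that $D-X$ has no directed path from $v$ to $S_i$. *)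

From mathcomp Require Import all_boot all_order all_algebra.
Set Implicit Arguments. Unset Strict Implicit. Unset Printing Implicit Defensive.

Record digraph := Digraph { dvert : finType ; darc : rel dvert }.

Definition rooted (H : digraph) : Prop :=
  exists r : dvert H, forall v : dvert H, connect (@darc H) r v.

Fixpoint in_family (H : digraph) (Hs : seq digraph) : Prop :=
  if Hs is H' :: Hs' then H' = H \/ in_family H Hs' else False.

Section DefsD.
Variables (V : finType) (E : rel V).

(* x reaches y by a directed path of D all of whose vertices lie in U
   (i.e. a path in D[U]; with U = ~: X this is reachability in D - X). *)
Definition reach_in (U : {set V}) (x y : V) : bool :=
  (x \in U) && connect [rel a b | [&& a \in U, b \in U & E a b]] x y.

Definition mutually_reachable (U : {set V}) (C : {set V}) : bool :=
  [forall x in C, forall y in C, reach_in U x y].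

Definition strong_component (U : {set V}) (C : {set V}) : bool :=
  maxset (mutually_reachable U) C.

(* (A, B) is a (not necessarily induced) subgraph of D[U]:
   vertex set A inside U, arc set B made of arcs of D between vertices of A. *)
Definition is_subgraph (U : {set V}) (A : {set V}) (B : {set V * V}) : Prop :=
  A \subset U /\ forall x y, (x, y) \in B -> [/\ x \in A, y \in A & E x y].

Definition iso_to (H : digraph) (A : {set V}) (B : {set V * V}) : Prop :=
  exists f : dvert H -> V,
    [/\ injective f, f @: setT = A &
        forall u v, darc u v = ((f u, f v) \in B)].

Definition iso_to_family (Hs : seq digraph) (A : {set V}) (B : {set V * V}) : Prop :=
  exists H, in_family H Hs /\ iso_to H A B.

Definition rooted_sub (A : {set V}) (B : {set V * V}) : Prop :=
  exists r, r \in A /\ forall v, v \in A -> connect [rel x y | (x, y) \in B] r v.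

Definition root_choice (rt : {set V} -> {set V * V} -> V) : Prop :=
  forall A B, is_subgraph setT A B -> rooted_sub A B ->
    rt A B \in A /\ forall v, v \in A -> connect [rel x y | (x, y) \in B] (rt A B) v.

Definition deletion_set (Hs : seq digraph) (X : {set V}) : Prop :=
  forall C, strong_component (~: X) C ->
    ~ (exists A B, is_subgraph C A B /\ iso_to_family Hs A B).

Definition R (A Y : {set V}) : {set V} :=
  [set v | [exists a in A, reach_in (~: Y) a v]].

Definition ordered_partition (W : {set V}) (S : seq {set V}) : Prop :=
  [/\ forall A, A \in S -> A != set0,
      forall i j, (i < j < size S)%N -> [disjoint nth set0 S i & nth set0 S j]
    & \bigcup_(A <- S) A = W].

Definition separates (S : seq {set V}) (X : {set V}) : Prop :=
  forall i j, (i < j < size S)%N ->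
    forall s p, s \in nth set0 S i -> path E s p -> last s p \in nth set0 S j ->
      exists2 v, v \in s :: p & v \in X.

Definition solution (Hs : seq digraph) (S : seq {set V}) (W : {set V}) (k : int)
    (X : {set V}) : Prop :=
  [/\ (#|X|%:Z <= k)%R, [disjoint X & W], deletion_set Hs X & separates S X].

Definition nice_solution (Hs : seq digraph) (rt : {set V} -> {set V * V} -> V)
    (S : seq {set V}) (W : {set V}) (k : int) (X : {set V}) : Prop :=
  solution Hs S W k X /\
  forall A B, is_subgraph setT A B -> iso_to_family Hs A B ->
    forall i, (i < size S)%N ->
      [\/ X :&: A != set0,
          rt A B \notin R (nth set0 S i) X
        | exists2 v, v \in A & ~~ [exists s in nth set0 S i, reach_in (~: X) v s]].

End DefsD.

From mathcomp Require Import all_boot all_order all_algebra.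

Set Implicit Arguments. Unset Strict Implicit. Unset Printing Implicit Defensive.

(* Given a deletion set X disjoint from W, split W into the traces of the
   strong components of D - X and list these parts by increasing size of
   R(S_i, X). A walk avoiding X from S_i to a different part S_j makes
   R(S_j, X) a proper subset of R(S_i, X), so it cannot go forward in the
   list: X separates the parts. For niceness, a copy F of a graph of H that
   avoids X, whose root is reached from S_i and all of whose vertices reach
   S_i, lies inside the strong component of D - X containing S_i, which is
   impossible since X is a deletion set. *)

Lemma connect_homo (T1 T2 : finType) (e1 : rel T1) (e2 : rel T2) (f : T1 -> T2) :
  {homo f : x y / e1 x y >-> e2 x y} ->
  {homo f : x y / connect e1 x y >-> connect e2 x y}.
Proof.
move=> hom x y /connectP [p e1p ->] {y}; elim: p x e1p => [|z p IHp] x /=.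
  by rewrite connect0.
by case/andP=> /hom e2xz /IHp; apply: connect_trans (connect1 e2xz).
Qed.

Lemma iso_to_family_rooted (V : finType) (Hs : seq digraph)
    (A : {set V}) (B : {set V * V}) :
  (forall H, in_family H Hs -> rooted H) -> iso_to_family Hs A B -> rooted_sub A B.
Proof.
move=> Hs_rooted [H [inH [f [_ fA fB]]]]; have [r r_root] := Hs_rooted _ inH.
exists (f r); split=> [|v]; first by rewrite -fA imset_f.
rewrite -fA => /imsetP [u _ ->].
by apply: connect_homo (r_root u) => x y; rewrite /= fB.
Qed.

Lemma uniq_ordered_partition (V : finType) (W : {set V}) (S : seq {set V}) :
  uniq S -> {in S, forall A, A != set0} ->
  {in S &, forall A B : {set V}, A != B -> [disjoint A & B]} ->
  \bigcup_(A <- S) A = W -> ordered_partition W S.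
Proof.
move=> S_uniq S_neq0 S_disj S_cover; split=> // i j /andP [lt_ij lt_jS].
have lt_iS := ltn_trans lt_ij lt_jS.
by apply: S_disj; rewrite ?mem_nth // nth_uniq // neq_ltn lt_ij.
Qed.

Section Reachability.

Variables (V : finType) (E : rel V) (X : {set V}).

Local Notation reach := (reach_in E (~: X)).

Lemma reach_in_refl x : x \notin X -> reach x x.
Proof. by move=> xX; rewrite /reach_in inE xX connect0. Qed.

Lemma reach_in_trans x y z : reach x y -> reach y z -> reach x z.
Proof.
case/andP=> xU cxy /andP [_ cyz].
by rewrite /reach_in xU (connect_trans cxy cyz).
Qed.

Lemma reach_in_path s p :
  path E s p -> ~~ has (mem X) (s :: p) -> reach s (last s p).
Proof.
elim: p s => [|z p IHp] s /=; first by rewrite orbF => _; apply: reach_in_refl.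
case/andP=> Esz walk_z; rewrite negb_or => /andP [sX avoid_z].
have /andP [zU reach_z] := IHp z walk_z avoid_z.
have sU : s \in ~: X by rewrite inE.
by rewrite /reach_in sU (connect_trans _ reach_z) // connect1 //= sU zU.
Qed.

Definition mutual_reach x y := reach x y && reach y x.

Lemma mutual_reach_sym x y : mutual_reach x y -> mutual_reach y x.
Proof. by case/andP=> xy yx; apply/andP. Qed.

Lemma mutual_reach_trans x y z :
  mutual_reach x y -> mutual_reach y z -> mutual_reach x z.
Proof.
case/andP=> xy yx /andP [yz zy].
by apply/andP; split; [apply: reach_in_trans xy yz | apply: reach_in_trans zy yx].
Qed.

Lemma strong_component_mutual_reach w :
  w \notin X -> strong_component E (~: X) [set v | mutual_reach w v].
Proof.
move=> wX; apply/maxsetP; split.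
  apply/forallP=> x; apply/implyP; rewrite inE => wx.
  apply/forallP=> y; apply/implyP; rewrite inE => wy.
  by case/andP: (mutual_reach_trans (mutual_reach_sym wx) wy).
move=> C C_mutual sub_C; apply/eqP; rewrite eqEsubset sub_C andbT.
have wC : w \in C by apply: (subsetP sub_C); rewrite inE /mutual_reach reach_in_refl.
apply/subsetP=> v vC; rewrite inE /mutual_reach.
have /forall_inP/(_ _ wC)/forall_inP/(_ _ vC) -> := C_mutual.
by have /forall_inP/(_ _ vC)/forall_inP/(_ _ wC) -> := C_mutual.
Qed.

Lemma reach_in_root (rt : {set V} -> {set V * V} -> V) A B :
  root_choice E rt -> is_subgraph E setT A B -> rooted_sub A B ->
  [disjoint X & A] -> {in A, forall v, reach (rt A B) v}.
Proof.
move=> rt_root [_ B_arcs] /(rt_root _ _) [//|rtA rt_reach] XA v vA.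
have AU u : u \in A -> u \in ~: X by move=> uA; rewrite inE (disjointFl XA uA).
rewrite /reach_in AU //; apply: connect_sub (rt_reach _ vA) => x y /B_arcs [xA yA Exy].
by apply: connect1; rewrite /= !AU.
Qed.

End Reachability.

Section ComponentClasses.

Variables (V : finType) (E : rel V) (X W : {set V}).
Hypothesis disjoint_XW : [disjoint X & W].

Local Notation reach := (reach_in E (~: X)).
Local Notation mutual_reach := (mutual_reach E X).

Definition class w := [set x in W | mutual_reach w x].

Definition class_order : seq {set V} :=
  sort (fun A B => #|R E A X| <= #|R E B X|) (undup [seq class w | w <- enum W]).

Lemma notin_X w : w \in W -> w \notin X.
Proof. by move=> wW; rewrite (disjointFl disjoint_XW wW). Qed.

Lemma class_id w : w \in W -> w \in class w.
Proof. by move=> wW; rewrite inE wW /mutual_reach reach_in_refl ?notin_X. Qed.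

Lemma eq_class a b : mutual_reach a b -> class a = class b.
Proof.
move=> ab; apply/setP=> x; rewrite !inE; congr (_ && _).
apply/idP/idP; first exact: mutual_reach_trans (mutual_reach_sym ab).
exact: mutual_reach_trans ab.
Qed.

Lemma class_orderP A : reflect (exists2 w, w \in W & A = class w) (A \in class_order).
Proof.
rewrite mem_sort mem_undup; apply: (iffP mapP) => [] [w wW ->];
  by exists w; rewrite ?mem_enum in wW *.
Qed.

Lemma class_order_uniq : uniq class_order.
Proof. by rewrite sort_uniq undup_uniq. Qed.

Lemma class_order_partition : ordered_partition W class_order.
Proof.
apply: uniq_ordered_partition class_order_uniq _ _ _.
- by move=> _ /class_orderP [w /class_id wW ->]; apply/set0Pn; exists w.
- move=> _ _ /class_orderP [a _ ->] /class_orderP [b _ ->] neq_ab.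
  rewrite -setI_eq0; apply: contraR neq_ab => /set0Pn [x].
  rewrite !inE => /andP [/andP [_ ax] /andP [_ bx]].
  by rewrite (eq_class (mutual_reach_trans ax (mutual_reach_sym bx))).
apply/setP=> x; rewrite bigcup_seq; apply/bigcupP/idP => [[_ /class_orderP [w _ ->]]|xW].
  by rewrite inE => /andP [].
by exists (class x); [apply/class_orderP; exists x | apply: class_id].
Qed.

Lemma R_class_proper wi wj s t :
  s \in class wi -> t \in class wj -> reach s t -> class wi != class wj ->
  R E (class wj) X \proper R E (class wi) X.
Proof.
rewrite !inE => /andP [sW wi_s] /andP [_ /andP [wj_t t_wj]] st neq_ij.
have reach_from_t v : v \in R E (class wj) X -> reach t v.
  rewrite inE => /existsP [a]; rewrite inE => /andP [/andP [_ /andP [wj_a _]] av].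
  exact: reach_in_trans t_wj (reach_in_trans wj_a av).
apply/properP; split.
  apply/subsetP=> v /reach_from_t tv; rewrite inE; apply/existsP; exists s.
  by rewrite inE sW wi_s (reach_in_trans st tv).
exists s.
  by rewrite inE; apply/existsP; exists s; rewrite inE sW wi_s reach_in_refl ?notin_X.
apply: contra neq_ij => /reach_from_t ts; apply/eqP/eq_class.
have s_wj : mutual_reach s wj.
  by rewrite /mutual_reach (reach_in_trans st t_wj) (reach_in_trans wj_t ts).
exact: mutual_reach_trans wi_s s_wj.
Qed.

Lemma class_order_separates : separates E class_order X.
Proof.
move=> i j /andP [lt_ij lt_jS] s p s_i walk t_j.
have lt_iS := ltn_trans lt_ij lt_jS.
have [/hasP [v vp vX] | avoid] := boolP (has (mem X) (s :: p)); first by exists v.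
have neq_ij : nth set0 class_order i != nth set0 class_order j.
  by rewrite nth_uniq ?class_order_uniq // neq_ltn lt_ij.
have le_ij : #|R E (nth set0 class_order i) X| <= #|R E (nth set0 class_order j) X|.
  have sorted_S : sorted (fun A B => #|R E A X| <= #|R E B X|) class_order.
    by apply: sort_sorted => A B; apply: leq_total.
  apply: (sorted_leq_nth _ _ set0 sorted_S) (ltnW lt_ij) => //.
  by move=> ? ? ?; apply: leq_trans.
move: s_i t_j neq_ij le_ij.
case/class_orderP: (mem_nth set0 lt_iS) => wi _ ->.
case/class_orderP: (mem_nth set0 lt_jS) => wj _ -> s_i t_j neq_ij.
by rewrite leqNgt proper_card // (R_class_proper s_i t_j (reach_in_path walk avoid)).
Qed.

Lemma class_order_nice Hs rt k :
  (forall H, in_family H Hs -> rooted H) -> root_choice E rt ->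
  solution E Hs class_order W k X -> nice_solution E Hs rt class_order W k X.
Proof.
move=> Hs_rooted rt_root sol; split=> // A B sub_AB iso_AB i lt_iS.
have [w0 w0W ->] := class_orderP _ (mem_nth set0 lt_iS).
have [XA | /negbNE] := boolP (X :&: A != set0); first exact: Or31.
rewrite setI_eq0 => XA.
have [rt_R | _] := boolP (rt A B \in R E (class w0) X); last by apply: Or32.
have [all_reach | /forall_inPn [v vA not_reach]] :=
  boolP [forall v in A, [exists s in class w0, reach v s]]; last by apply: Or33; exists v.
exfalso; have [_ _ X_deletion _] := sol.
have rt_reach := reach_in_root rt_root sub_AB (iso_to_family_rooted Hs_rooted iso_AB) XA.
have A_comp : A \subset [set v | mutual_reach w0 v].
  apply/subsetP=> v vA; rewrite inE; apply/andP; split.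
    move: rt_R; rewrite inE => /existsP [a].
    rewrite inE => /andP [/andP [_ /andP [w0a _]] art].
    exact: reach_in_trans w0a (reach_in_trans art (rt_reach _ vA)).
  have /forall_inP/(_ _ vA)/exists_inP [s] := all_reach.
  by rewrite inE => /andP [_ /andP [_ sw0]] vs; apply: reach_in_trans vs sw0.
apply: (X_deletion _ (strong_component_mutual_reach _ (notin_X w0W))).
by exists A, B; split=> //; split=> //; case: sub_AB.
Qed.

End ComponentClasses.

Theorem lemma8 (V : finType) (E : rel V) (Hs : seq digraph)
    (rt : {set V} -> {set V * V} -> V) (k : int) (W : {set V}) :
  (forall H, in_family H Hs -> rooted H) ->
  root_choice E rt ->
  deletion_set E Hs W ->
  (#|W|%:Z <= k + 1)%R ->
  (exists X : {set V}, [/\ (#|X|%:Z <= k)%R, deletion_set E Hs X & [disjoint X & W]])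
  <->
  (exists S : seq {set V}, ordered_partition W S /\
     exists X : {set V}, nice_solution E Hs rt S W k X).
Proof.
move=> Hs_rooted rt_root _ _; split=> [[X [size_X X_deletion XW]] |].
  exists (class_order E X W); split; first exact: class_order_partition.
  exists X; apply: class_order_nice => //.
  by split=> //; apply: class_order_separates.
by case=> S [_ [X [[size_X XW X_deletion _] _]]]; exists X.
Qed.
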